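(* Let $\pi$ be a partition in $\mathbb{C}(3,3)$ having at least one odd part. Then there exists a unique integer $m\ge0$ such that $\pi\in\mathbb{C}_{=}(3,3|m)$.
   Context: A partition $\pi=(\pi_1,\dots,\pi_\ell)$ is a finite non-increasing sequence of positive integers; ''$a$ occurs in $\pi$'' means $a=\pi_i$ for some $i$. Göllnitz–Gordon marking: $GG(\pi)$ assigns a positive integer (mark) to each part, processing the parts from smallest to largest; $\pi_i$ receives the smallest positive integer different from the marks of all parts $\pi_g$ with $g>i$ and $\pi_i-\pi_g\le 2$, where $\pi_i-\pi_g<2$ is required when $\pi_i$ is odd. An ''$r$-marked part $a$'' is a part equal to $a$ with mark $r$. $N_i(\pi)$ is the number of parts with mark $i$; $\pi^{(i)}_1\ge\dots\ge\pi^{(i)}_{N_i(\pi)}$ are the parts with mark $i$, with $\pi^{(i)}_0=+\infty$, $\pi^{(i)}_{N_i(\pi)+1}=-\infty$. $\mathbb{C}(k,r)$: partitions with (i) no odd part repeated; (ii) $\pi_i\ge\pi_{i+k-1}+2$ for $1\le i\le\ell-k+1$, strict if $\pi_i$ even; (iii) at most $r-1$ parts $\le 2$. Starting types: for $\pi\in\mathbb{C}(k,r)$ with $N_2=N_2(\pi)\ge1$, let $l$ be the largest integer in $\{0,\dots,N_2\}$ such that no odd part of $\pi$ is $\ge\pi^{(2)}_l$; for $l<i\le N_2$, $\pi^{(2)}_i$ has type $s_{-1}$. For $b=1,\dots,l$ in increasing order, type and auxiliary $\sigma_b$: for $b=1$: Case 1: 1-marked part $\pi^{(2)}_1-1$ exists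 and $\pi^{(2)}_1+2$ does not occur: type $s_0$, $\sigma_1=\pi^{(2)}_1-1$; Case 2: 1-marked $\pi^{(2)}_1-2$ exists and $\pi^{(2)}_1+2$ does not occur: type $s_1$, $\sigma_1=\pi^{(2)}_1-2$; Case 3: 1-marked $\pi^{(2)}_1+2$ exists: type $s_2$, $\sigma_1=\pi^{(2)}_1+2$; Case 4: 1-marked $\pi^{(2)}_1$ exists: type $s_3$, $\sigma_1=\pi^{(2)}_1$. For $2\le b\le l$: Case 1: 1-marked $\pi^{(2)}_b-1$ exists and, if a 1-marked $\pi^{(2)}_b+2$ exists, $\sigma_{b-1}=\pi^{(2)}_b+2$: type $s_0$, $\sigma_b=\pi^{(2)}_b-1$; Case 2: same with $\pi^{(2)}_b-2$: type $s_1$, $\sigma_b=\pi^{(2)}_b-2$; Case 3: 1-marked $\pi^{(2)}_b+2$ exists and $\sigma_{b-1}\ne\pi^{(2)}_b+2$: type $s_2$, $\sigma_b=\pi^{(2)}_b+2$; Case 4: 1-marked $\pi^{(2)}_b$ exists: type $s_3$, $\sigma_b=\pi^{(2)}_b$. $\mathbb{C}_{=}(k,r|p,t)$ (for $p,t\ge0$): the set of $\pi\in\mathbb{C}(k,r)$ such that (1) the largest odd part of $\pi$ is $2t+1$; (2) the mark of $2t+1$ in $GG(\pi)$ is at most $2$; (3) $\pi^{(2)}_p\ge 2t+2$ and $\pi^{(2)}_{p+1}\le 2t+2$; (4) if there is a 2-marked part $2t+2$ of starting type $s_0$, then $\pi^{(2)}_{p+1}=2t+2$ and there exists $1\le i\le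 p+1$ with $\pi^{(2)}_i=\pi^{(2)}_{p+1}+4(p-i+1)$ and $\pi^{(2)}_i$ occurring exactly once in $\pi$; (5) if there is a 2-marked part $2t+2$ of starting type $s_2$, then $\pi^{(2)}_p=2t+2$; (6) if $2t+2$ occurs in $\pi$ and there is no 2-marked part $2t+2$, then $\pi^{(2)}_p=2t+4$, it is of starting type $s_3$, and there exists $1\le i\le p$ with $\pi^{(2)}_i=\pi^{(2)}_p+4(p-i)$ such that $\pi^{(2)}_i+2$ does not occur in $\pi$. For $m\ge 0$, $\mathbb{C}_{=}(k,r|m)=\bigcup_{p,t\ge0,\ p+t=m}\mathbb{C}_{=}(k,r|p,t)$. *)

(* Partitions are non-increasing sequences of
   positive naturals: s = [:: pi_1; ...; pi_l], stored 0-based. *)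
From mathcomp Require Import all_boot.

Set Implicit Arguments.
Unset Strict Implicit.
Unset Printing Implicit Defensive.

Definition is_partition (s : seq nat) : bool :=
  sorted geq s && all (fun x => 0 < x) s.

Definition mex1 (ms : seq nat) : nat :=
  head 0 [seq k <- iota 1 (size ms).+1 | k \notin ms].

(* a is the part being marked, b an already marked (smaller or equal) part:
   b conflicts with a iff a - b <= 2, with a - b < 2 required when a is odd *)
Definition gg_conflict (a b : nat) : bool :=
  if odd a then a - b < 2 else a - b <= 2.

(* process parts from smallest to largest; prev = already marked (part, mark) *)
Fixpoint gg_aux (prev : seq (nat * nat)) (r : seq nat) : seq nat :=
  match r with
  | [::] => [::]
  | a :: r' =>
      let m := mex1 [seq q.2 | q <- prev & gg_conflict a q.1] in
      m :: gg_aux ((a, m) :: prev) r'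
  end.

(* GG s : the list of marks, aligned with s (i-th entry = mark of pi_(i+1)) *)
Definition GG (s : seq nat) : seq nat := rev (gg_aux [::] (rev s)).

(* parts with mark j, in non-increasing order: pi^(j)_1 >= pi^(j)_2 >= ... *)
Definition marked (s : seq nat) (j : nat) : seq nat :=
  [seq x.1 | x <- zip s (GG s) & x.2 == j].

Definition Nmark (s : seq nat) (j : nat) : nat := size (marked s j).

Inductive extn := NInf | Fin of nat | PInf.

Definition ext_le (x y : extn) : bool :=
  match x, y with
  | NInf, _ => true
  | _, PInf => true
  | Fin a, Fin b => a <= b
  | _, _ => false
  end.

(* pi^(j)_k, 1-based; pi^(j)_0 = +oo, pi^(j)_k = -oo for k > N_j *)
Definition pisup (s : seq nat) (j k : nat) : extn :=
  if k == 0 then PInf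
  else if k <= Nmark s j then Fin (nth 0 (marked s j) k.-1) else NInf.

Definition in_C (k r : nat) (s : seq nat) : Prop :=
  is_partition s /\
  (forall x, odd x -> count_mem x s <= 1) /\
  (forall i, i + k.-1 < size s ->
      nth 0 s (i + k.-1) + 2 <= nth 0 s i /\
      (~~ odd (nth 0 s i) -> nth 0 s (i + k.-1) + 2 < nth 0 s i)) /\
  count (fun x => x <= 2) s <= r.-1.

Inductive stype := s_m1 | s_0 | s_1 | s_2 | s_3.

Definition l_ok (s : seq nat) (l : nat) : bool :=
  all (fun x => odd x ==> ~~ ext_le (pisup s 2 l) (Fin x)) s.

Definition l_idx (s : seq nat) : nat :=
  \max_(l < (Nmark s 2).+1 | l_ok s l) (nat_of_ord l).

(* type and sigma_b of pi^(2)_b, given sigma_(b-1) (None if undefined) *)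
Definition stype_case (s : seq nat) (b : nat) (sig : option nat)
  : option (stype * nat) :=
  let v := nth 0 (marked s 2) b.-1 in
  let M1 := marked s 1 in
  if b == 1 then
    if (v - 1 \in M1) && (v + 2 \notin s) then Some (s_0, v - 1)
    else if (v - 2 \in M1) && (v + 2 \notin s) then Some (s_1, v - 2)
    else if v + 2 \in M1 then Some (s_2, v + 2)
    else if v \in M1 then Some (s_3, v)
    else None
  else
    if (v - 1 \in M1) && ((v + 2 \in M1) ==> (sig == Some (v + 2)))
      then Some (s_0, v - 1)
    else if (v - 2 \in M1) && ((v + 2 \in M1) ==> (sig == Some (v + 2)))
      then Some (s_1, v - 2)
    else if (v + 2 \in M1) && (sig != Some (v + 2)) then Some (s_2, v + 2)
    else if v \in M1 then Some (s_3, v)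
    else None.

Fixpoint stype_iter (s : seq nat) (b : nat) : option (stype * nat) :=
  match b with
  | 0 => None
  | b'.+1 => stype_case s b'.+1 (omap snd (stype_iter s b'))
  end.

Definition start_type (s : seq nat) (i : nat) : option stype :=
  if (1 <= i <= Nmark s 2) then
    (if i <= l_idx s then omap fst (stype_iter s i) else Some s_m1)
  else None.

Definition has_2marked_type (s : seq nat) (a : nat) (T : stype) : Prop :=
  exists i, 1 <= i <= Nmark s 2 /\ pisup s 2 i = Fin a /\ start_type s i = Some T.

Definition C_eq_pt (k r : nat) (s : seq nat) (p t : nat) : Prop :=
  in_C k r s /\
  ((2 * t + 1 \in s) /\ (forall x, x \in s -> odd x -> x <= 2 * t + 1)) /\
  (exists i, i < size s /\ nth 0 s i = 2 * t + 1 /\ nth 0 (GG s) i <= 2) /\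
  ext_le (Fin (2 * t + 2)) (pisup s 2 p) /\
  ext_le (pisup s 2 p.+1) (Fin (2 * t + 2)) /\
  (has_2marked_type s (2 * t + 2) s_0 ->
     pisup s 2 p.+1 = Fin (2 * t + 2) /\
     exists i, 1 <= i <= p.+1 /\
       pisup s 2 i = Fin (2 * t + 2 + 4 * (p.+1 - i)) /\
       count_mem (2 * t + 2 + 4 * (p.+1 - i)) s = 1) /\
  (has_2marked_type s (2 * t + 2) s_2 -> pisup s 2 p = Fin (2 * t + 2)) /\
  ((2 * t + 2 \in s) /\ (2 * t + 2 \notin marked s 2) ->
     pisup s 2 p = Fin (2 * t + 4) /\ start_type s p = Some s_3 /\
     exists i, 1 <= i <= p /\
       pisup s 2 i = Fin (2 * t + 4 + 4 * (p - i)) /\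
       (2 * t + 4 + 4 * (p - i)) + 2 \notin s).

Definition C_eq_m (k r : nat) (s : seq nat) (m : nat) : Prop :=
  exists p t, p + t = m /\ C_eq_pt k r s p t.

From mathcomp Require Import all_boot zify.

Set Implicit Arguments.
Unset Strict Implicit.
Unset Printing Implicit Defensive.

(* Let 2t+1 be the largest odd part.  The parts above it are even and at least
   2t+2, and the gap condition of C(3,3) leaves at most one part >= 2t below it,
   so 2t+1 gets mark 1 or 2 and t is forced by condition (1).  If 2t+2 is not a
   part, conditions (4)-(6) are void and (3) forces p to be the number of
   2-marked parts above 2t+2.  Otherwise 2t+2 occurs once, right above 2t+1,
   with mark 2 while 2t+1 has mark 1; since 2t is not a part and 2t+4, if it is
   one, has mark 1, the starting type of 2t+2 is s_0 or s_2, and condition (4),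
   resp. (5), pins p down to the index of 2t+2 among the 2-marked parts minus
   one, resp. to that index. *)

Lemma GG_cons x s :
  GG (x :: s) = mex1 [seq q.2 | q <- zip s (GG s) & gg_conflict x q.1] :: GG s.
Proof.
have gg_aux_rcons prev r y : gg_aux prev (rcons r y) = rcons (gg_aux prev r)
    (mex1 [seq q.2 | q <- rev (zip r (gg_aux prev r)) ++ prev & gg_conflict y q.1]).
  elim: r prev => [|a r IHr] prev //=.
  rewrite IHr /=; congr (_ :: rcons _ (mex1 _)).
  by rewrite rev_cons -cats1 -catA.
have size_gg_aux prev r : size (gg_aux prev r) = size r.
  by elim: r prev => [|a r IHr] prev //=; rewrite IHr.
rewrite /GG rev_cons gg_aux_rcons rev_rcons cats0.
by rewrite rev_zip ?revK // size_gg_aux size_rev.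
Qed.

Lemma size_GG s : size (GG s) = size s.
Proof. by elim: s => [|x s IHs] //; rewrite GG_cons /= IHs. Qed.

Lemma GG_cat A R : exists2 X, GG (A ++ R) = X ++ GG R & size X = size A.
Proof.
elim: A => [|a A [X HX sizeX]]; first by exists [::].
by exists (head 0 (GG (a :: A ++ R)) :: X); rewrite /= ?sizeX // GG_cons HX.
Qed.

Lemma marked_cat A R j :
  exists2 P, marked (A ++ R) j = P ++ marked R j & {subset P <= A}.
Proof.
have [X HX sizeX] := GG_cat A R.
exists [seq x.1 | x <- zip A X & x.2 == j].
  by rewrite /marked HX zip_cat // filter_cat map_cat.
have /mem_subseq : subseq [seq x.1 | x <- zip A X & x.2 == j] (unzip1 (zip A X)).
  by rewrite map_subseq ?filter_subseq.
by rewrite unzip1_zip // sizeX.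
Qed.

Lemma marked_sub s j : {subset marked s j <= s}.
Proof.
have /mem_subseq : subseq (marked s j) (unzip1 (zip s (GG s))).
  by rewrite map_subseq ?filter_subseq.
by rewrite unzip1_zip // size_GG.
Qed.

Lemma mex1_le ms : mex1 ms <= (size ms).+1.
Proof.
rewrite /mex1; set ks := iota 1 (size ms).+1.
have /mem_subseq : subseq [seq k <- ks | k \notin ms] ks by exact: filter_subseq.
case: filter => // k l /(_ k (mem_head _ _)).
by rewrite mem_iota /=; lia.
Qed.

Lemma size_conflict_marks x s :
  size [seq q.2 | q <- zip s (GG s) & gg_conflict x q.1] = count (gg_conflict x) s.
Proof.
have sizeGG : size s <= size (GG s) by rewrite size_GG.
by rewrite size_map size_filter -[in RHS](unzip1_zip sizeGG) count_map.
Qed.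

Lemma head_GG_cons_le x s : head 0 (GG (x :: s)) <= (count (gg_conflict x) s).+1.
Proof. by rewrite GG_cons -size_conflict_marks; apply: mex1_le. Qed.

Lemma conflict_marks_nil x s : {in s, forall y, ~~ gg_conflict x y} ->
  [seq q.2 | q <- zip s (GG s) & gg_conflict x q.1] = [::].
Proof.
move=> free; apply/eqP; rewrite -size_eq0 size_conflict_marks eqn0Ngt -has_count.
exact/hasPn.
Qed.

Lemma GG_cons_free x s : {in s, forall y, ~~ gg_conflict x y} -> GG (x :: s) = 1 :: GG s.
Proof. by move=> free; rewrite GG_cons conflict_marks_nil. Qed.

Lemma GG_cons_cons x y s : gg_conflict x y -> {in s, forall z, ~~ gg_conflict x z} ->
  GG [:: x, y & s] = mex1 [:: head 0 (GG (y :: s))] :: GG (y :: s).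
Proof.
move=> conf free; rewrite GG_cons; congr (mex1 _ :: _).
by rewrite [GG (y :: s)]GG_cons /= conf; congr (_ :: _); apply: conflict_marks_nil.
Qed.

Lemma gg_conflict_far a b : b + 2 < a -> ~~ gg_conflict a b.
Proof. by rewrite /gg_conflict; case: odd; lia. Qed.

Lemma odd_double_add1 t : odd (2 * t + 1).
Proof. by rewrite oddD oddM. Qed.

Lemma even_double_add2 t : ~~ odd (2 * t + 2).
Proof. by rewrite oddD oddM. Qed.

Lemma GG_even_odd t B : {in B, forall x, x < 2 * t} ->
  GG [:: 2 * t + 2, 2 * t + 1 & B] = [:: 2, 1 & GG B].
Proof.
move=> ltB; rewrite GG_cons_cons ?GG_cons_free //.
- by move=> x /ltB; rewrite /gg_conflict odd_double_add1; lia.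
- by rewrite /gg_conflict; case: odd; lia.
- by move=> x /ltB lt_x; apply: gg_conflict_far; lia.
Qed.

Lemma GG_even_even_odd t B : {in B, forall x, x < 2 * t} ->
  GG [:: 2 * t + 4, 2 * t + 2, 2 * t + 1 & B] = [:: 1, 2, 1 & GG B].
Proof.
move=> ltB; rewrite GG_cons_cons ?GG_even_odd //.
- by rewrite /gg_conflict oddD oddM /=; lia.
- move=> x; rewrite inE => /predU1P [->|/ltB lt_x]; apply: gg_conflict_far; lia.
Qed.

Lemma marked_even_odd t B j : {in B, forall x, x < 2 * t} ->
  marked [:: 2 * t + 2, 2 * t + 1 & B] j =
  [seq x.1 | x <- [:: (2 * t + 2, 2); (2 * t + 1, 1)] & x.2 == j] ++ marked B j.
Proof.
move=> ltB; rewrite {1}/marked (GG_even_odd ltB) /=.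
by case: (2 == j); case: (1 == j).
Qed.

Definition ext_nth (L : seq nat) (k : nat) : extn :=
  if k == 0 then PInf else if k <= size L then Fin (nth 0 L k.-1) else NInf.

Lemma pisupE s j k : pisup s j k = ext_nth (marked s j) k.
Proof. by []. Qed.

Lemma ext_nth_mem L k y : ext_nth L k = Fin y -> y \in L.
Proof.
by rewrite /ext_nth; case: k => // k; case: ifP => // lt_k [<-]; apply: mem_nth.
Qed.

Lemma ext_nth_cat P Q k :
  ext_nth (P ++ Q) k = if k <= size P then ext_nth P k else ext_nth Q (k - size P).
Proof.
case: k => [|k]; rewrite /ext_nth /= ?leq0n // size_cat nth_cat.
case: (ltnP k (size P)) => [lt_kP | le_Pk]; first by rewrite ltn_addr.
by rewrite subSn //= ltn_subLR.
Qed.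

Lemma ext_nth_at P x Q : ext_nth (P ++ x :: Q) (size P).+1 = Fin x.
Proof. by rewrite ext_nth_cat ltnn subSnn. Qed.

Lemma Fin_le_ext_nth P Q c k : {in P, forall x, c <= x} -> {in Q, forall x, x < c} ->
  ext_le (Fin c) (ext_nth (P ++ Q) k) = (k <= size P).
Proof.
move=> geP ltQ; rewrite ext_nth_cat; case: leqP => [|lt_Pk].
  by case: k => // k lt_kP; rewrite /ext_nth /= lt_kP /= geP ?mem_nth.
rewrite /ext_nth subn_eq0 leqNgt lt_Pk /=; case: ifP => //= lt_Q.
by rewrite leqNgt ltQ // mem_nth // -subn1 ltn_subLR ?subn_gt0 // add1n.
Qed.

Lemma ext_nth_le_Fin P Q c k : {in P, forall x, c < x} -> {in Q, forall x, x <= c} ->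
  ext_le (ext_nth (P ++ Q) k) (Fin c) = (size P < k).
Proof.
move=> gtP leQ; rewrite ext_nth_cat; case: leqP => [le_kP|lt_Pk].
  case: k le_kP => // k lt_kP; rewrite /ext_nth /= lt_kP /=.
  by apply/negbTE; rewrite -ltnNge gtP ?mem_nth.
rewrite /ext_nth subn_eq0 leqNgt lt_Pk /=; case: ifP => //= lt_Q.
by rewrite leQ // mem_nth // -subn1 ltn_subLR ?subn_gt0 // add1n.
Qed.

Lemma ext_nth_eq_Fin P c Q k : {in P, forall x, c < x} -> {in Q, forall x, x < c} ->
  ext_nth (P ++ c :: Q) k = Fin c -> k = (size P).+1.
Proof.
move=> gtP ltQ eq_c.
have geP : {in rcons P c, forall x, c <= x}.
  by move=> x; rewrite mem_rcons inE => /predU1P [-> //|/gtP/ltnW].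
have leQ : {in c :: Q, forall x, x <= c}.
  by move=> x; rewrite inE => /predU1P [-> //|/ltQ/ltnW].
have := Fin_le_ext_nth k geP ltQ; have := ext_nth_le_Fin k gtP leQ.
by rewrite cat_rcons eq_c /= leqnn size_rcons; lia.
Qed.

Lemma has_2marked_type_mem s a T : has_2marked_type s a T -> a \in s.
Proof. by move=> [i [_ [/ext_nth_mem/marked_sub]]]. Qed.

Lemma sorted_geq_cat s L x R : sorted geq s -> s = L ++ x :: R ->
  {in L, forall y, x <= y} /\ {in R, forall y, y <= x}.
Proof.
move=> /[swap] ->; rewrite sorted_pairwise; last exact: rev_trans leq_trans.
rewrite pairwise_cat pairwise_cons => /and4P [/allrelP geL _ /allP leR _].
by split=> y y_in; [apply: geL; rewrite ?mem_head | apply: leR].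
Qed.

Lemma sorted_geq_rcons_min A c : sorted geq A -> c \in A -> {in A, forall x, c <= x} ->
  exists A1, A = rcons A1 c.
Proof.
case/lastP: A => [//|A1 y] sorted_A c_in ge_c; exists A1; congr rcons.
have y_le_c : y <= c.
  move: c_in; rewrite mem_rcons inE => /predU1P [-> //|c_in].
  by have [+ _] := sorted_geq_cat sorted_A (esym (cats1 A1 y)); apply.
by apply/eqP; rewrite eqn_leq y_le_c ge_c // mem_rcons mem_head.
Qed.

Lemma C33_gap s L x y z R : in_C 3 3 s -> s = L ++ [:: x, y, z & R] ->
  z + 2 <= x /\ (~~ odd x -> z + 2 < x).
Proof.
move=> [_ [_ [gap _]]] s_eq; have := gap (size L).
rewrite s_eq !nth_cat ltnn subnn /= [size L + 2 < size L]ltnNge leq_addr addKn size_cat /=.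
by apply; rewrite ltn_add2l.
Qed.

Lemma C33_split_largest_odd s : in_C 3 3 s -> has odd s ->
  exists t A B, [/\ s = A ++ 2 * t + 1 :: B,
    {in A, forall x, ~~ odd x /\ 2 * t + 2 <= x},
    {in B, forall x, x <= 2 * t} & {in behead B, forall x, x < 2 * t}].
Proof.
move=> C_s has_odd; have [/andP [sorted_s _] [odd_once _]] := C_s.
set a := find odd s; set t := (nth 0 s a)./2.
have odd_a : odd (nth 0 s a) by apply: nth_find.
have nth_a : nth 0 s a = 2 * t + 1.
  by rewrite -[LHS]odd_double_half odd_a -muln2 mulnC addnC.
have s_eq : s = take a s ++ 2 * t + 1 :: drop a.+1 s.
  by rewrite -nth_a -drop_nth ?cat_take_drop // -has_find.
have [geA leB] := sorted_geq_cat sorted_s s_eq.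
exists t, (take a s), (drop a.+1 s); split=> //.
- move=> x x_in; have := geA x x_in.
  have even_x : ~~ odd x.
    move: x_in => /(nthP 0) [i /[!size_take_min] /[!leq_min] /andP [lt_ia _] <-].
    by rewrite nth_take // (negbT (before_find _ lt_ia)).
  rewrite leq_eqVlt => /predU1P [eq_x|]; last by split=> //; lia.
  by move: even_x; rewrite -eq_x odd_double_add1.
- have notin_B : 2 * t + 1 \notin drop a.+1 s.
    apply/count_memPn; have := odd_once _ (odd_double_add1 t).
    by rewrite {1}s_eq count_cat /= eqxx /=; lia.
  move=> x x_in; have := leB x x_in; rewrite leq_eqVlt => /predU1P [eq_x|]; last lia.
  by move: notin_B; rewrite -eq_x x_in.
- case B_eq: (drop a.+1 s) s_eq => [|b1 [|b2 B]] //= s_eq x.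
  have [gap_b2 _] := C33_gap C_s s_eq.
  have [_ le_b2] := sorted_geq_cat sorted_s (etrans s_eq (catA _ [:: _; _] _)).
  by rewrite inE => /predU1P [-> |/le_b2]; lia.
Qed.

Lemma largest_odd_cat s A B t : s = A ++ 2 * t + 1 :: B ->
  {in A, forall x, ~~ odd x /\ 2 * t + 2 <= x} -> {in B, forall x, x <= 2 * t} ->
  (2 * t + 1 \in s) /\ (forall x, x \in s -> odd x -> x <= 2 * t + 1).
Proof.
move=> -> evenA leB; split; first by rewrite mem_cat mem_head orbT.
move=> x; rewrite mem_cat inE => /orP [/evenA [/negbTE -> //]|/predU1P [-> //|/leB]].
by move=> le_x _; apply: leq_trans le_x (leq_addr _ _).
Qed.

Lemma mark_largest_odd s A B t : s = A ++ 2 * t + 1 :: B ->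
  {in behead B, forall x, x < 2 * t} ->
  exists i, i < size s /\ nth 0 s i = 2 * t + 1 /\ nth 0 (GG s) i <= 2.
Proof.
move=> -> ltB; exists (size A).
rewrite size_cat /= addnS ltnS leq_addr nth_cat ltnn subnn; split=> //; split=> //.
have [X -> sizeX] := GG_cat A (2 * t + 1 :: B).
rewrite nth_cat sizeX ltnn subnn nth0; apply: (leq_trans (head_GG_cons_le _ _)).
case: B ltB => //= b B ltB.
suff -> : count (gg_conflict (2 * t + 1)) B = 0 by rewrite addn0; case: gg_conflict.
apply/eqP; rewrite eqn0Ngt -has_count.
by apply/hasPn => x /ltB lt_x; rewrite /gg_conflict odd_double_add1; lia.
Qed.

Lemma C33_split_even s A B t : in_C 3 3 s -> s = A ++ 2 * t + 1 :: B ->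
  {in A, forall x, ~~ odd x /\ 2 * t + 2 <= x} -> 2 * t + 2 \in A ->
  exists A1, [/\ s = A1 ++ [:: 2 * t + 2, 2 * t + 1 & B],
    {in A1, forall x, 2 * t + 4 <= x}, {in B, forall x, x < 2 * t} &
    (2 * t + 4 \in A1 -> exists A2, A1 = rcons A2 (2 * t + 4))].
Proof.
move=> C_s s_eq evenA A_2; have [/andP [sorted_s _] _] := C_s.
have [sorted_A _] : sorted geq A * sorted geq (2 * t + 1 :: B).
  by apply: cat_sorted2; rewrite -s_eq.
have [A1 A_eq] := sorted_geq_rcons_min sorted_A A_2 (fun x x_in => (evenA x x_in).2).
have {}s_eq : s = A1 ++ [:: 2 * t + 2, 2 * t + 1 & B] by rewrite s_eq A_eq cat_rcons.
have geA1 : {in A1, forall x, 2 * t + 4 <= x}.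
  case/lastP: A1 A_eq s_eq => // A2 w A_eq; rewrite cat_rcons => s_eq.
  have [_ gap_w] := C33_gap C_s s_eq.
  have [ge_w _] := sorted_geq_cat sorted_s s_eq.
  have w_in : w \in A by rewrite A_eq mem_rcons inE mem_rcons mem_head orbT.
  have := gap_w (evenA w w_in).1.
  by move=> lt_w x; rewrite mem_rcons inE => /predU1P [->|/ge_w]; lia.
exists A1; split=> //.
- case: B s_eq => //= b B s_eq x.
  have [_ gap_b] := C33_gap C_s s_eq.
  have [_ le_b] := sorted_geq_cat sorted_s (etrans s_eq (catA _ [:: _; _] _)).
  have := gap_b (even_double_add2 t).
  by rewrite inE => lt_b /predU1P [->|/le_b]; lia.
- move=> A1_4; apply: sorted_geq_rcons_min A1_4 geA1.
  by have := sorted_s; rewrite s_eq => /cat_sorted2 [].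
Qed.

Lemma marked1_split_even s A B t : s = A ++ [:: 2 * t + 2, 2 * t + 1 & B] ->
  {in A, forall x, 2 * t + 4 <= x} -> {in B, forall x, x < 2 * t} ->
  (2 * t + 4 \in A -> exists A2, A = rcons A2 (2 * t + 4)) ->
  [/\ 2 * t + 1 \in marked s 1, 2 * t \notin marked s 1 &
      (2 * t + 4 \in s -> 2 * t + 4 \in marked s 1)].
Proof.
move=> s_eq geA ltB A_4; split.
- have [P1 marked1 _] := marked_cat A [:: 2 * t + 2, 2 * t + 1 & B] 1.
  by rewrite s_eq marked1 (marked_even_odd _ ltB) mem_cat mem_head orbT.
- apply/negP => /marked_sub; rewrite s_eq mem_cat !inE.
  by case/orP => [/geA|/or3P [/eqP|/eqP|/ltB]]; lia.
move=> in_s; have [A2 A_eq] : exists A2, A = rcons A2 (2 * t + 4).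
  by apply: A_4; move: in_s; rewrite s_eq mem_cat !inE => /orP [//|/or3P [/eqP|/eqP|/ltB]]; lia.
have [P1 marked1 _] := marked_cat A2 [:: 2 * t + 4, 2 * t + 2, 2 * t + 1 & B] 1.
by rewrite s_eq A_eq cat_rcons marked1 {1}/marked (GG_even_even_odd ltB) mem_cat mem_head orbT.
Qed.

Lemma start_type_s0_or_s2 s P c Q : marked s 2 = P ++ c :: Q ->
  (forall x, x \in s -> odd x -> x < c) ->
  c - 1 \in marked s 1 -> c - 2 \notin marked s 1 ->
  (c + 2 \in s -> c + 2 \in marked s 1) ->
  start_type s (size P).+1 = Some s_0 \/ start_type s (size P).+1 = Some s_2.
Proof.
move=> marked2 lt_odd M1_pred M1_pred2 M1_succ.
have le_N : (size P).+1 <= Nmark s 2 by rewrite /Nmark marked2 size_cat addnS ltnS leq_addr.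
have ok : l_ok s (size P).+1.
  apply/allP => x x_in; apply/implyP => odd_x.
  by rewrite pisupE marked2 ext_nth_at /= -ltnNge lt_odd.
have le_l : (size P).+1 <= l_idx s.
  have lt_N : (size P).+1 < (Nmark s 2).+1 by rewrite ltnS.
  exact: (@leq_bigmax_cond _ (fun l : 'I_(Nmark s 2).+1 => l_ok s l) (@nat_of_ord _)
            (Ordinal lt_N) ok).
rewrite /start_type le_N le_l /= /stype_case marked2 nth_cat ltnn subnn /= M1_pred.
rewrite (negbTE M1_pred2) /=.
case: (size P) => [|k] /=.
  by case: (boolP (c + 2 \in s)) => [/M1_succ -> | _]; [right | left].
by case: (c + 2 \in marked s 1) => /=; [case: eqP => _; [left | right] | left].
Qed.

Lemma C_eq_m_exists_unique k r s p0 t : C_eq_pt k r s p0 t ->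
  (forall p, C_eq_pt k r s p t -> p = p0) -> exists! m, C_eq_m k r s m.
Proof.
move=> pt0 uniq_p; exists (p0 + t); split; first by exists p0, t.
move=> m [p [t' [<- pt']]].
have [_ [[odd_t le_t] _]] := pt0; have [_ [[odd_t' le_t'] _]] := pt'.
have eq_t : t' = t.
  by have := le_t _ odd_t' (odd_double_add1 t'); have := le_t' _ odd_t (odd_double_add1 t); lia.
by rewrite eq_t in pt' *; rewrite (uniq_p p).
Qed.

Section LargestOddPart.

Variables (s : seq nat) (t : nat).
Hypothesis C_s : in_C 3 3 s.
Hypothesis largest_odd : (2 * t + 1 \in s) /\ (forall x, x \in s -> odd x -> x <= 2 * t + 1).
Hypothesis mark_odd : exists i, i < size s /\ nth 0 s i = 2 * t + 1 /\ nth 0 (GG s) i <= 2.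

Lemma C_eq_m_unique_even_notin A B : s = A ++ 2 * t + 1 :: B ->
  {in A, forall x, 2 * t + 2 < x} -> {in B, forall x, x <= 2 * t} ->
  exists! m, C_eq_m 3 3 s m.
Proof.
move=> s_eq gtA leB.
have notin_s : 2 * t + 2 \notin s.
  by rewrite s_eq mem_cat inE; apply/negP => /orP [/gtA|/predU1P [|/leB]]; lia.
have no_type T : ~ has_2marked_type s (2 * t + 2) T.
  by move/has_2marked_type_mem; apply/negP.
have [P marked2 subP] := marked_cat A (2 * t + 1 :: B) 2; rewrite -s_eq in marked2.
have geP : {in P, forall x, 2 * t + 2 <= x} by move=> x /subP /gtA /ltnW.
have ltQ : {in marked (2 * t + 1 :: B) 2, forall x, x < 2 * t + 2}.
  by move=> x /marked_sub; rewrite inE => /predU1P [|/leB]; lia.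
have gtP : {in P, forall x, 2 * t + 2 < x} by move=> x /subP /gtA.
have leQ : {in marked (2 * t + 1 :: B) 2, forall x, x <= 2 * t + 2} by move=> x /ltQ /ltnW.
apply: (C_eq_m_exists_unique (p0 := size P) (t := t)).
  do 3!split=> //; rewrite !pisupE marked2 Fin_le_ext_nth // ext_nth_le_Fin //.
  split=> //; split=> //; split; first by move/no_type.
  by split=> [/no_type //|]; rewrite (negbTE notin_s); case.
move=> p [_ [_ [_ [+ [+ _]]]]].
rewrite !pisupE marked2 Fin_le_ext_nth // ext_nth_le_Fin // => le_p lt_p.
by apply/eqP; rewrite eqn_leq le_p -ltnS.
Qed.

Section EvenPart.

Variables P Q : seq nat.
Hypothesis marked2 : marked s 2 = P ++ 2 * t + 2 :: Q.
Hypothesis gtP : {in P, forall x, 2 * t + 2 < x}.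
Hypothesis ltQ : {in Q, forall x, x < 2 * t + 2}.

Lemma Fin_le_pisup_even p : ext_le (Fin (2 * t + 2)) (pisup s 2 p) = (p <= (size P).+1).
Proof.
rewrite pisupE marked2 -cat_rcons Fin_le_ext_nth ?size_rcons // => x.
by rewrite mem_rcons inE => /predU1P [-> //|/gtP/ltnW].
Qed.

Lemma pisup_le_Fin_even p : ext_le (pisup s 2 p) (Fin (2 * t + 2)) = (size P < p).
Proof.
rewrite pisupE marked2 ext_nth_le_Fin // => x.
by rewrite inE => /predU1P [-> //|/ltQ/ltnW].
Qed.

Lemma has_2marked_type_evenP T :
  has_2marked_type s (2 * t + 2) T <-> start_type s (size P).+1 = Some T.
Proof.
split=> [[i [_ [+ <-]]]|type_T]; first by rewrite pisupE marked2 => /(ext_nth_eq_Fin gtP ltQ) ->.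
exists (size P).+1; rewrite pisupE marked2 ext_nth_at /Nmark marked2 size_cat /=.
by rewrite addnS ltnS leq_addr.
Qed.

Lemma even_in_marked2 : 2 * t + 2 \in marked s 2.
Proof. by rewrite marked2 mem_cat mem_head orbT. Qed.

Lemma C_eq_m_unique_even_s0 : count_mem (2 * t + 2) s = 1 ->
  start_type s (size P).+1 = Some s_0 -> exists! m, C_eq_m 3 3 s m.
Proof.
move=> count_even type0; have has_type0 := proj2 (has_2marked_type_evenP s_0) type0.
apply: (C_eq_m_exists_unique (p0 := size P) (t := t)).
  do 3!split=> //; rewrite Fin_le_pisup_even pisup_le_Fin_even leqnSn ltnSn.
  do 2!split=> //; split.
    move=> _; rewrite pisupE marked2 ext_nth_at; split=> //.
    by exists (size P).+1; rewrite subnn muln0 addn0 pisupE marked2 ext_nth_at leqnn.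
  split; first by move/has_2marked_type_evenP; rewrite type0.
  by rewrite even_in_marked2; case.
move=> p [_ [_ [_ [_ [_ [/(_ has_type0) [+ _] _]]]]]].
by rewrite pisupE marked2 => /(ext_nth_eq_Fin gtP ltQ) [].
Qed.

Lemma C_eq_m_unique_even_s2 :
  start_type s (size P).+1 = Some s_2 -> exists! m, C_eq_m 3 3 s m.
Proof.
move=> type2; have has_type2 := proj2 (has_2marked_type_evenP s_2) type2.
apply: (C_eq_m_exists_unique (p0 := (size P).+1) (t := t)).
  do 3!split=> //; rewrite Fin_le_pisup_even pisup_le_Fin_even leqnn ltnS leqnSn.
  do 2!split=> //; split; first by move/has_2marked_type_evenP; rewrite type2.
  split; first by rewrite pisupE marked2 ext_nth_at.
  by rewrite even_in_marked2; case.
move=> p [_ [_ [_ [_ [_ [_ [/(_ has_type2) + _]]]]]]].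
by rewrite pisupE marked2 => /(ext_nth_eq_Fin gtP ltQ).
Qed.

End EvenPart.

Lemma C_eq_m_unique_even_in A B : s = A ++ [:: 2 * t + 2, 2 * t + 1 & B] ->
  {in A, forall x, 2 * t + 4 <= x} -> {in B, forall x, x < 2 * t} ->
  (2 * t + 4 \in A -> exists A2, A = rcons A2 (2 * t + 4)) ->
  exists! m, C_eq_m 3 3 s m.
Proof.
move=> s_eq geA ltB A_4.
have notin_A c : c < 2 * t + 4 -> c \notin A by move=> lt_c; apply/negP => /geA; lia.
have notin_B c : 2 * t <= c -> c \notin B by move=> le_c; apply/negP => /ltB; lia.
have [P marked2 subP] := marked_cat A [:: 2 * t + 2, 2 * t + 1 & B] 2.
rewrite -s_eq (marked_even_odd _ ltB) /= in marked2.
have gtP : {in P, forall x, 2 * t + 2 < x} by move=> x /subP /geA; lia.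
have ltQ : {in marked B 2, forall x, x < 2 * t + 2} by move=> x /marked_sub /ltB; lia.
have count_even : count_mem (2 * t + 2) s = 1.
  rewrite s_eq count_cat (count_memPn (notin_A (2 * t + 2) _)) /=; last lia.
  by rewrite (count_memPn (notin_B (2 * t + 2) _)); lia.
have [M1_odd M1_even M1_succ] := marked1_split_even s_eq geA ltB A_4.
have M1_pred : 2 * t + 2 - 1 \in marked s 1 by rewrite -addnBA.
have M1_pred2 : 2 * t + 2 - 2 \notin marked s 1 by rewrite -addnBA // subnn addn0.
have M1_succ2 : 2 * t + 2 + 2 \in s -> 2 * t + 2 + 2 \in marked s 1 by rewrite -addnA.
have lt_odd x : x \in s -> odd x -> x < 2 * t + 2 by move=> /largest_odd.2 /[apply]; lia.
have [type0|type2] := start_type_s0_or_s2 marked2 lt_odd M1_pred M1_pred2 M1_succ2.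
- exact: C_eq_m_unique_even_s0 marked2 gtP ltQ count_even type0.
- exact: C_eq_m_unique_even_s2 marked2 gtP ltQ type2.
Qed.

End LargestOddPart.

Theorem theorem5p5 (s : seq nat) :
  in_C 3 3 s -> has odd s -> exists! m : nat, C_eq_m 3 3 s m.
Proof.
move=> C_s has_odd.
have [t [A [B [s_eq evenA leB ltB]]]] := C33_split_largest_odd C_s has_odd.
have largest_odd := largest_odd_cat s_eq evenA leB.
have mark_odd := mark_largest_odd s_eq ltB.
have [A_2 | notA_2] := boolP (2 * t + 2 \in A).
  have [A1 [s_eq1 geA1 ltB1 A1_4]] := C33_split_even C_s s_eq evenA A_2.
  exact: C_eq_m_unique_even_in s_eq1 geA1 ltB1 A1_4.
apply: C_eq_m_unique_even_notin s_eq _ leB => // x x_A.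
have [_ ge_x] := evenA x x_A; rewrite ltn_neqAle ge_x andbT.
by apply: contraNneq notA_2 => ->.
Qed.
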